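(* Let $(\mathcal A;\mathcal E)$ be an exact category with exact coproducts. Then the coproduct, in the arrow category with its exact structure $\mathrm{Arr}(\mathcal E)$, of any set of ME-conflations of arrows is an ME-conflation.
   Context: An exact category $(\mathcal A;\mathcal E)$ is an additive category with a class of conflations satisfying the Quillen–Keller axioms; it has exact coproducts if set-indexed coproducts exist and coproducts of conflations are conflations. The arrow category $\mathrm{Arr}(\mathcal A)$ has as objects the morphisms $a:A_0\to A_1$ of $\mathcal A$ and as morphisms $a\to b$ the pairs $(f_0,f_1)$ with $bf_0=f_1a$. Its exact structure $\mathrm{Arr}(\mathcal E)$ consists of the sequences $b\to c\to a$ given by a morphism of conflations from $B_0\to C_0\to A_0$ to $B_1\to C_1\to A_1$ with vertical components $b,c,a$. Such a conflation of arrows is ME (mono-epi) if there is a conflation $B_0\to C\to A_1$ and a factorization $c=c_2c_1$ such that $(1_{B_0},c_1,a)$ is a morphism of conflations from $B_0\to C_0\to A_0$ to $B_0\to C\to A_1$ and $(b,c_2,1_{A_1})$ is a morphism of conflations from $B_0\to C\to A_1$ to $B_1\to C_1\to A_1$. *)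

From HB Require Import structures.
From mathcomp Require Import all_boot all_algebra.
Set Implicit Arguments. Unset Strict Implicit. Unset Printing Implicit Defensive.
Import GRing.Theory.
Local Open Scope ring_scope.

Record AddCat := {
  obj :> Type;
  hom : obj -> obj -> zmodType;
  comp : forall a b c : obj, hom b c -> hom a b -> hom a c;
  idm : forall a : obj, hom a a;
  compA : forall a b c d (h : hom c d) (g : hom b c) (f : hom a b),
      comp h (comp g f) = comp (comp h g) f;
  comp1m : forall a b (f : hom a b), comp (idm b) f = f;
  compm1 : forall a b (f : hom a b), comp f (idm a) = f;
  compDl : forall a b c (g g' : hom b c) (f : hom a b),
      comp (g + g') f = comp g f + comp g' f;
  compDr : forall a b c (g : hom b c) (f f' : hom a b),
      comp g (f + f') = comp g f + comp g f';
  has_zero_object : exists z : obj,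
      (forall a (f : hom a z), f = 0) /\ (forall a (f : hom z a), f = 0);
  has_biproducts : forall a b : obj, exists (c : obj) (i1 : hom a c) (i2 : hom b c)
      (p1 : hom c a) (p2 : hom c b),
      [/\ comp p1 i1 = idm a, comp p2 i2 = idm b, comp p1 i2 = 0,
          comp p2 i1 = 0 & comp i1 p1 + comp i2 p2 = idm c]
}.

Arguments comp {_ _ _ _}.
Arguments idm {_}.
Arguments hom {_}.

Section Exact.
Variable C : AddCat.

Definition is_iso (a b : C) (f : hom a b) : Prop :=
  exists g : hom b a, comp g f = idm a /\ comp f g = idm b.

Definition kernel_cokernel_pair (a b c : C) (i : hom a b) (d : hom b c) : Prop :=
  [/\ comp d i = 0,
      (forall (x : C) (f : hom x b), comp d f = 0 ->
         exists g : hom x a, comp i g = f /\ forall g', comp i g' = f -> g' = g)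
    & (forall (y : C) (f : hom b y), comp f i = 0 ->
         exists g : hom c y, comp g d = f /\ forall g', comp g' d = f -> g' = g)].

Definition seq_class := forall a b c : C, hom a b -> hom b c -> Prop.

Section ExactDefs.
Variable E : seq_class.

Definition inflation (a b : C) (i : hom a b) := exists (c : C) (d : hom b c), E i d.
Definition deflation (b c : C) (d : hom b c) := exists (a : C) (i : hom a b), E i d.

Definition is_pushout (a b a' b' : C) (i : hom a b) (f : hom a a')
    (i' : hom a' b') (f' : hom b b') : Prop :=
  comp f' i = comp i' f /\
  forall (x : C) (g : hom b x) (h : hom a' x), comp g i = comp h f ->
    exists u : hom b' x, (comp u f' = g /\ comp u i' = h) /\
      forall u', comp u' f' = g -> comp u' i' = h -> u' = u.

Definition is_pullback (b c b' c' : C) (d : hom b c) (f : hom c' c)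
    (d' : hom b' c') (f' : hom b' b) : Prop :=
  comp d f' = comp f d' /\
  forall (x : C) (g : hom x b) (h : hom x c'), comp d g = comp f h ->
    exists u : hom x b', (comp f' u = g /\ comp d' u = h) /\
      forall u', comp f' u' = g -> comp d' u' = h -> u' = u.

Definition is_exact_structure : Prop :=
  [/\
      (forall a b c (i : hom a b) (d : hom b c), E i d -> kernel_cokernel_pair i d),
      (forall a b c a' b' c' (i : hom a b) (d : hom b c) (i' : hom a' b') (d' : hom b' c')
              (x : hom a a') (y : hom b b') (z : hom c c'),
          E i d -> is_iso x -> is_iso y -> is_iso z ->
          comp y i = comp i' x -> comp z d = comp d' y -> E i' d'),
      (forall a : C, inflation (idm a)) /\ (forall a : C, deflation (idm a)),
      (forall a b c (f : hom a b) (g : hom b c),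
          inflation f -> inflation g -> inflation (comp g f)) /\
      (forall a b c (f : hom a b) (g : hom b c),
          deflation f -> deflation g -> deflation (comp g f))
    &
      (forall a b a' (i : hom a b) (f : hom a a'), inflation i ->
          exists (b' : C) (i' : hom a' b') (f' : hom b b'),
            is_pushout i f i' f' /\ inflation i') /\
      (forall b c c' (d : hom b c) (f : hom c' c), deflation d ->
          exists (b' : C) (d' : hom b' c') (f' : hom b' b),
            is_pullback d f d' f' /\ deflation d')].

Definition is_coproduct (I : Type) (A : I -> C) (S : C) (inj : forall i, hom (A i) S) :=
  forall (x : C) (f : forall i, hom (A i) x),
    exists u : hom S x, (forall i, comp u (inj i) = f i) /\
      forall u', (forall i, comp u' (inj i) = f i) -> u' = u.

Definition has_exact_coproducts : Prop :=
  (forall (I : Type) (A : I -> C), exists (S : C) (inj : forall i, hom (A i) S),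
      is_coproduct inj) /\
  (forall (I : Type) (A B Cc : I -> C) (f : forall i, hom (A i) (B i))
          (g : forall i, hom (B i) (Cc i)),
     (forall i, E (f i) (g i)) ->
     forall (SA SB SC : C) (jA : forall i, hom (A i) SA) (jB : forall i, hom (B i) SB)
            (jC : forall i, hom (Cc i) SC) (F : hom SA SB) (G : hom SB SC),
       is_coproduct jA -> is_coproduct jB -> is_coproduct jC ->
       (forall i, comp F (jA i) = comp (jB i) (f i)) ->
       (forall i, comp G (jB i) = comp (jC i) (g i)) ->
       E F G).

Record arrow := Arrow { src : C; tgt : C; amor : hom src tgt }.

Definition arr_hom (x y : arrow) := (hom (src x) (src y) * hom (tgt x) (tgt y))%type.
Definition is_arr_hom (x y : arrow) (f : arr_hom x y) : Prop :=
  comp (amor y) f.1 = comp f.2 (amor x).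
Definition arr_comp (x y z : arrow) (g : arr_hom y z) (f : arr_hom x y) : arr_hom x z :=
  (comp g.1 f.1, comp g.2 f.2).

(* Arr(E)-conflation b --f--> c --g--> a: a morphism of conflations
   (B0 -> C0 -> A0) => (B1 -> C1 -> A1) with vertical components b, c, a. *)
Definition arr_conflation (b c a : arrow) (f : arr_hom b c) (g : arr_hom c a) : Prop :=
  [/\ is_arr_hom f, is_arr_hom g, E f.1 g.1 & E f.2 g.2].

Definition ME_conflation (b c a : arrow) (f : arr_hom b c) (g : arr_hom c a) : Prop :=
  arr_conflation f g /\
  exists (Cm : C) (x : hom (src b) Cm) (y : hom Cm (tgt a))
         (c1 : hom (src c) Cm) (c2 : hom Cm (tgt c)),
    [/\ E x y, amor c = comp c2 c1,
        (* (1_{B0}, c1, a) is a morphism of conflations *)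
        comp x (idm (src b)) = comp c1 f.1 /\ comp y c1 = comp (amor a) g.1
      & (* (b, c2, 1_{A1}) is a morphism of conflations *)
        comp f.2 (amor b) = comp c2 x /\ comp g.2 c2 = comp (idm (tgt a)) y].

Definition is_arr_coproduct (I : Type) (A : I -> arrow) (S : arrow)
    (inj : forall i, arr_hom (A i) S) : Prop :=
  (forall i, is_arr_hom (inj i)) /\
  forall (x : arrow) (f : forall i, arr_hom (A i) x), (forall i, is_arr_hom (f i)) ->
    exists u : arr_hom S x, is_arr_hom u /\ (forall i, arr_comp u (inj i) = f i) /\
      forall u', is_arr_hom u' -> (forall i, arr_comp u' (inj i) = f i) -> u' = u.

End ExactDefs.
End Exact.

From Pilot Require Import Defs.
From HB Require Import structures.
From mathcomp Require Import all_boot all_algebra.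
From Stdlib Require Import ClassicalEpsilon.
Import Defs.
Set Implicit Arguments. Unset Strict Implicit. Unset Printing Implicit Defensive.
Import GRing.Theory.
Local Open Scope ring_scope.

(* A coproduct in Arr(A) is computed componentwise, so the coproduct of a
   family of Arr(E)-conflations is a pair of coproducts of E-conflations.
   For the ME factorizations, take the coproduct of the middle objects C_i
   and glue the factorizations c_i = c2_i c1_i by the universal properties;
   every required identity holds after composing with the coprojections,
   where it is one of the identities of the i-th factorization. *)

Section Coproducts.
Variable C : AddCat.

Lemma comp0m (a b c : C) (f : hom a b) : comp (0 : hom b c) f = 0.
Proof.
apply: (@addrI _ (comp (0 : hom b c) f)).
by rewrite -compDl !addr0.
Qed.

Lemma coproduct_ext (I : Type) (A : I -> C) (S x : C)
    (inj : forall i, hom (A i) S) (u v : hom S x) :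
  is_coproduct inj -> (forall i, comp u (inj i) = comp v (inj i)) -> u = v.
Proof.
move=> cop e; have [w [_ w_uniq]] := cop x (fun i => comp v (inj i)).
by rewrite (w_uniq u e) (w_uniq v (fun i => erefl)).
Qed.

Section ArrowCoproduct.
Variables (I : Type) (A : I -> arrow C) (S : arrow C).
Variable inj : forall i, arr_hom (A i) S.
Hypothesis cop : is_arr_coproduct inj.

(* Test the universal property against the arrow [x --0--> x]. *)
Lemma arr_coproduct_src : is_coproduct (fun i => (inj i).1).
Proof.
have [_ univ] := cop; move=> x h.
pose zero_arrow := Arrow (0 : hom x x).
have zero_hom (y : arrow C) (u : hom (src y) x) :
    is_arr_hom (y := zero_arrow) (u, 0).
  by rewrite /is_arr_hom /= !comp0m.
have [u [_ [u_inj u_uniq]]] := univ zero_arrow _ (fun i => zero_hom (A i) (h i)).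
exists u.1; split=> [i|u' u'_inj]; first exact: (congr1 fst (u_inj i)).
apply: (congr1 fst (u_uniq (u', 0) (zero_hom S u') _)) => i.
by rewrite /arr_comp /= u'_inj comp0m.
Qed.

(* Test the universal property against the arrow [x --1--> x]. *)
Lemma arr_coproduct_tgt : is_coproduct (fun i => (inj i).2).
Proof.
have [inj_hom univ] := cop; move=> x h.
pose id_arrow := Arrow (idm x).
have id_hom (y : arrow C) (u : hom (tgt y) x) :
    is_arr_hom (y := id_arrow) (comp u (amor y), u).
  by rewrite /is_arr_hom /= comp1m.
have [u [_ [u_inj u_uniq]]] := univ id_arrow _ (fun i => id_hom (A i) (h i)).
exists u.2; split=> [i|u' u'_inj]; first exact: (congr1 snd (u_inj i)).
apply: (congr1 snd (u_uniq _ (id_hom S u') _)) => i.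
by rewrite /arr_comp /= u'_inj -compA inj_hom compA u'_inj.
Qed.

End ArrowCoproduct.
End Coproducts.

Section ExactCoproducts.
Variables (C : AddCat) (E : seq_class C).
Hypothesis exact_cop : has_exact_coproducts E.

Record ME_factorization (b c a : arrow C) (f : arr_hom b c) (g : arr_hom c a) := {
  me_mid : C;
  me_infl : hom (src b) me_mid;
  me_defl : hom me_mid (tgt a);
  me_fst : hom (src c) me_mid;
  me_snd : hom me_mid (tgt c);
  me_conflation : E me_infl me_defl;
  me_factor : amor c = comp me_snd me_fst;
  me_fst_infl : comp me_infl (idm (src b)) = comp me_fst f.1;
  me_fst_defl : comp me_defl me_fst = comp (amor a) g.1;
  me_snd_infl : comp f.2 (amor b) = comp me_snd me_infl;
  me_snd_defl : comp g.2 me_snd = comp (idm (tgt a)) me_defl }.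

Lemma ME_conflationP (b c a : arrow C) (f : arr_hom b c) (g : arr_hom c a) :
  ME_conflation E f g <-> arr_conflation E f g /\ inhabited (ME_factorization f g).
Proof.
split=> [[fg [M [x [y [c1 [c2 [? ? [? ?] [? ?]]]]]]]] | [fg [M]]].
  by split=> //; constructor; exact: (@Build_ME_factorization _ _ _ _ _ M x y c1 c2).
split=> //; exists (me_mid M), (me_infl M), (me_defl M), (me_fst M), (me_snd M).
by split; [exact: me_conflation | exact: me_factor | split; apply M ..].
Qed.

Section CoproductFamily.
Variables (I : Type) (Bs Cs As : I -> arrow C).
Variables (f : forall i, arr_hom (Bs i) (Cs i)) (g : forall i, arr_hom (Cs i) (As i)).
Variables (SB SC SA : arrow C).
Variables (jB : forall i, arr_hom (Bs i) SB) (jC : forall i, arr_hom (Cs i) SC).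
Variable jA : forall i, arr_hom (As i) SA.
Variables (F : arr_hom SB SC) (G : arr_hom SC SA).
Hypotheses (copB : is_arr_coproduct jB) (copC : is_arr_coproduct jC).
Hypothesis copA : is_arr_coproduct jA.
Hypothesis F_inj : forall i, arr_comp F (jB i) = arr_comp (jC i) (f i).
Hypothesis G_inj : forall i, arr_comp G (jC i) = arr_comp (jA i) (g i).

Let F_inj1 i : comp F.1 (jB i).1 = comp (jC i).1 (f i).1 := congr1 fst (F_inj i).
Let F_inj2 i : comp F.2 (jB i).2 = comp (jC i).2 (f i).2 := congr1 snd (F_inj i).
Let G_inj1 i : comp G.1 (jC i).1 = comp (jA i).1 (g i).1 := congr1 fst (G_inj i).
Let G_inj2 i : comp G.2 (jC i).2 = comp (jA i).2 (g i).2 := congr1 snd (G_inj i).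

Lemma arr_conflation_coproduct :
  is_arr_hom F -> is_arr_hom G -> (forall i, arr_conflation E (f i) (g i)) ->
  arr_conflation E F G.
Proof.
move=> F_hom G_hom fg; have [_ conf_cop] := exact_cop.
have fg1 i : E (f i).1 (g i).1 by case: (fg i).
have fg2 i : E (f i).2 (g i).2 by case: (fg i).
split=> //.
  exact: (conf_cop _ _ _ _ _ _ fg1 _ _ _ _ _ _ _ _ (arr_coproduct_src copB)
    (arr_coproduct_src copC) (arr_coproduct_src copA) F_inj1 G_inj1).
exact: (conf_cop _ _ _ _ _ _ fg2 _ _ _ _ _ _ _ _ (arr_coproduct_tgt copB)
  (arr_coproduct_tgt copC) (arr_coproduct_tgt copA) F_inj2 G_inj2).
Qed.

Lemma ME_factorization_coproduct :
  (forall i, ME_factorization (f i) (g i)) -> inhabited (ME_factorization F G).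
Proof.
move=> M; have [cop_ex conf_cop] := exact_cop.
have [SM [jM copM]] := cop_ex I (fun i => me_mid (M i)).
have [srcB srcC] := (arr_coproduct_src copB, arr_coproduct_src copC).
have [X [X_inj _]] := srcB SM (fun i => comp (jM i) (me_infl (M i))).
have [Y [Y_inj _]] := copM (tgt SA) (fun i => comp (jA i).2 (me_defl (M i))).
have [C1 [C1_inj _]] := srcC SM (fun i => comp (jM i) (me_fst (M i))).
have [C2 [C2_inj _]] := copM (tgt SC) (fun i => comp (jC i).2 (me_snd (M i))).
constructor; apply: (@Build_ME_factorization _ _ _ _ _ SM X Y C1 C2).
- exact: (conf_cop _ _ _ _ _ _ (fun i => me_conflation (M i)) _ _ _ _ _ _ _ _
    srcB copM (arr_coproduct_tgt copA) X_inj Y_inj).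
- apply: (coproduct_ext srcC) => i.
  rewrite (proj1 copC i) (me_factor (M i)) -[RHS]compA C1_inj.
  by rewrite [RHS]compA C2_inj compA.
- apply: (coproduct_ext srcB) => i.
  rewrite compm1 X_inj -compA F_inj1 compA C1_inj -compA.
  by rewrite -me_fst_infl compm1.
- apply: (coproduct_ext srcC) => i.
  rewrite -compA C1_inj compA Y_inj -compA me_fst_defl compA -(proj1 copA i).
  by rewrite -!compA G_inj1.
- apply: (coproduct_ext srcB) => i.
  rewrite -[LHS]compA (proj1 copB i) compA F_inj2 -compA (me_snd_infl (M i)).
  by rewrite -[RHS]compA X_inj [RHS]compA C2_inj compA.
- apply: (coproduct_ext copM) => i.
  rewrite -!compA C2_inj compA G_inj2 -compA me_snd_defl !comp1m.
  by rewrite Y_inj.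
Qed.

End CoproductFamily.
End ExactCoproducts.

Theorem proposition5p3 (C : AddCat) (E : seq_class C)
  (HE : is_exact_structure E) (Hcop : has_exact_coproducts E)
  (I : Type) (Bs Cs As : I -> arrow C)
  (f : forall i, arr_hom (Bs i) (Cs i)) (g : forall i, arr_hom (Cs i) (As i))
  (HME : forall i, ME_conflation E (f i) (g i))
  (SB SC SA : arrow C)
  (jB : forall i, arr_hom (Bs i) SB) (jC : forall i, arr_hom (Cs i) SC)
  (jA : forall i, arr_hom (As i) SA)
  (F : arr_hom SB SC) (G : arr_hom SC SA) :
  is_arr_coproduct jB -> is_arr_coproduct jC -> is_arr_coproduct jA ->
  is_arr_hom F -> is_arr_hom G ->
  (forall i, arr_comp F (jB i) = arr_comp (jC i) (f i)) ->
  (forall i, arr_comp G (jC i) = arr_comp (jA i) (g i)) ->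
  ME_conflation E F G.
Proof.
move=> copB copC copA F_hom G_hom F_inj G_inj.
have fgM i := proj1 (ME_conflationP E (f i) (g i)) (HME i).
have M i : ME_factorization E (f i) (g i) := epsilon (fgM i).2 (fun _ => True).
apply/ME_conflationP; split.
  apply: (arr_conflation_coproduct Hcop copB copC copA F_inj G_inj) => // i.
  exact: (fgM i).1.
exact: (ME_factorization_coproduct Hcop copB copC copA F_inj G_inj M).
Qed.
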